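(* Let $G$ be a matching covered graph and let $\partial(X)$ be a nontrivial tight cut of $G$. If $G$ is cycle-extendable, then both $\partial(X)$-contractions $G/X$ and $G/\overline{X}$ are also cycle-extendable.
   Context: Graphs are loopless; multiple edges allowed. A graph is matching covered if it is connected, has at least two vertices, and every edge lies in some perfect matching; it is cycle-extendable if moreover for every even cycle $C$ the graph $G-V(C)$ has a perfect matching. For $X\subseteq V(G)$, $\partial(X)$ is the set of edges with exactly one end in $X$, and $\overline X = V(G)\setminus X$; $\partial(X)$ is a tight cut if every perfect matching of $G$ contains exactly one edge of $\partial(X)$, and nontrivial if $|X|\ge2$ and $|\overline X|\ge2$. $G/X$ is obtained from $G$ by shrinking $X$ to a single new vertex (deleting edges with both ends in $X$ and keeping all other edges, possibly creating parallel edges); $G/\overline X$ is defined analogously. *)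

From mathcomp Require Import all_boot.
Set Implicit Arguments. Unset Strict Implicit. Unset Printing Implicit Defensive.

(* A multigraph: finite vertex type, finite edge type, each edge has two ends.
   Parallel edges are allowed (distinct edges with the same ends). *)
Record mgraph := MGraph {
  vertex : finType;
  edge : finType;
  src : edge -> vertex;
  tgt : edge -> vertex }.

Section Defs.
Variable G : mgraph.

Definition loopless : Prop := forall e : edge G, src e != tgt e.

Definition inc (e : edge G) (v : vertex G) : bool := (src e == v) || (tgt e == v).

Definition joins (e : edge G) (u v : vertex G) : bool :=
  ((src e == u) && (tgt e == v)) || ((src e == v) && (tgt e == u)).

Definition adj (u v : vertex G) : bool := [exists e, joins e u v].

Definition connected : Prop := forall u v : vertex G, connect adj u v.

Definition perfect_matching (M : {set edge G}) : Prop :=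
  forall v : vertex G, #|[set e in M | inc e v]| = 1.

Definition perfect_matching_del (S : {set vertex G}) (M : {set edge G}) : Prop :=
  (forall e, e \in M -> (src e \notin S) && (tgt e \notin S)) /\
  (forall v : vertex G, v \notin S -> #|[set e in M | inc e v]| = 1).

Definition matching_covered : Prop :=
  connected /\ 2 <= #|vertex G| /\
  (forall e : edge G, exists M, perfect_matching M /\ e \in M).

(* An even cycle of length k: k distinct vertices vs 0 .. vs (k-1) and k distinct
   edges, edge es i joining vs i and vs (i+1 mod k); k >= 2 and k even
   (k = 2 is a pair of parallel edges). *)
Definition even_cycle (k : nat) (vs : 'I_k -> vertex G) (es : 'I_k -> edge G) : Prop :=
  [/\ 2 <= k, ~~ odd k, injective vs, injective es &
      forall i : 'I_k, joins (es i) (vs i) (vs (ordS i))].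

Definition cycle_vertices k (vs : 'I_k -> vertex G) : {set vertex G} :=
  [set vs i | i : 'I_k].

Definition cycle_extendable : Prop :=
  matching_covered /\
  forall k (vs : 'I_k -> vertex G) (es : 'I_k -> edge G),
    even_cycle vs es -> exists M, perfect_matching_del (cycle_vertices vs) M.

Definition cut (X : {set vertex G}) : {set edge G} :=
  [set e | (src e \in X) != (tgt e \in X)].

Definition tight_cut (X : {set vertex G}) : Prop :=
  forall M, perfect_matching M -> #|M :&: cut X| = 1.

Definition nontrivial_cut (X : {set vertex G}) : Prop :=
  2 <= #|X| /\ 2 <= #|~: X|.

End Defs.

(* G/X : shrink X to a single new vertex (None); edges with both ends in X are
   deleted, all other edges kept with ends mapped. *)
Section Contract.
Variables (G : mgraph) (X : {set vertex G}).

Definition cvertex : finType := option {v : vertex G | v \notin X}.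
Definition cedge : finType := {e : edge G | ~~ ((src e \in X) && (tgt e \in X))}.
Definition cmap (v : vertex G) : cvertex := insub v.

Definition contract : mgraph :=
  @MGraph cvertex cedge (fun e => cmap (src (val e))) (fun e => cmap (tgt (val e))).
End Contract.

(* Restricting to G/X a perfect matching of G - S gives a perfect matching of G/X - T
   when S and T agree outside X and the matching has one cut edge or none, according as
   the contracted vertex is kept or deleted.  So an even cycle C of G/X is lifted to an
   even cycle C' of G.  If C avoids the contracted vertex, C' = C: a perfect matching of
   G - V(C) plus every other edge of C is perfect, so by tightness the former has exactly
   one cut edge.  Otherwise C enters X through edges e0 and e1 with ends a and b in X.
   Take perfect matchings M0 and M1 containing e0 and e1: the walk from b alternating
   between M0 and M1 can leave X only through e0 or e1, so it reaches a after an even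
   number of steps along a path inside X, and this path closes the lift of C into an even
   cycle C' through e0.  A perfect matching of G - V(C') plus every other edge of C',
   e0 among them, is perfect, so the former has no cut edge.  The shore ~: X is
   symmetric. *)

From mathcomp Require Import all_boot zify.
Set Implicit Arguments. Unset Strict Implicit. Unset Printing Implicit Defensive.

Lemma cards1_eq (T : finType) (A : {set T}) x y : #|A| = 1 -> x \in A -> y \in A -> x = y.
Proof. by move/eqP/cards1P => [z ->]; rewrite !inE => /eqP -> /eqP ->. Qed.

Lemma cycle_nthP (T : Type) (e : rel T) (x0 : T) (s : seq T) :
  reflect (forall i, i < size s -> e (nth x0 s i) (nth x0 s (i.+1 %% size s))) (cycle e s).
Proof.
case: s => [|x p]; first by left.
have nthS i : i < (size p).+1 -> nth x0 (rcons p x) i = nth x0 (x :: p) (i.+1 %% (size p).+1).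
  rewrite ltnS leq_eqVlt nth_rcons => /orP [/eqP ->|lt]; first by rewrite modnn ltnn eqxx.
  by rewrite modn_small ?lt.
have nth0 i : i < (size p).+1 -> nth x0 (x :: rcons p x) i = nth x0 (x :: p) i.
  by move=> lti; rewrite -rcons_cons nth_rcons /= lti.
apply: (iffP (pathP x0)) => h i; rewrite ?size_rcons /= => lti; have := h i;
  by rewrite ?size_rcons nth0 // nthS // => ->.
Qed.

Section Incidence.
Variable G : mgraph.
Implicit Types (e : edge G) (u v w : vertex G).

Lemma joins_sym e u v : joins e u v = joins e v u.
Proof. by rewrite /joins orbC. Qed.

Lemma joins_ends e u v : joins e u v ->
  (u = src e /\ v = tgt e) \/ (u = tgt e /\ v = src e).
Proof. by case/orP => /andP [/eqP -> /eqP ->]; [left|right]. Qed.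

Lemma inc_src e : inc e (src e). Proof. by rewrite /inc eqxx. Qed.
Lemma inc_tgt e : inc e (tgt e). Proof. by rewrite /inc eqxx orbT. Qed.

Lemma joins_incl e u v : joins e u v -> inc e u.
Proof. by case/joins_ends => -[-> _]; rewrite ?inc_src ?inc_tgt. Qed.

Lemma joins_incr e u v : joins e u v -> inc e v.
Proof. by rewrite joins_sym; apply: joins_incl. Qed.

Lemma inc_ends e w : inc e w -> w = src e \/ w = tgt e.
Proof. by case/orP => /eqP ->; [left|right]. Qed.

Lemma joins_inc e u v w : joins e u v -> inc e w -> w = u \/ w = v.
Proof. by case/joins_ends => -[-> ->] /inc_ends []; auto. Qed.

Lemma joins_uniq e u v u' v' : joins e u v -> joins e u' v' ->
  (u = u' /\ v = v') \/ (u = v' /\ v = u').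
Proof. by do 2 case/joins_ends => -[-> ->]; auto. Qed.

Lemma perfect_matching_del0 (M : {set edge G}) :
  perfect_matching M <-> perfect_matching_del set0 M.
Proof.
split=> [pM|[_ pM] v]; last by apply: pM; rewrite inE.
by split=> [e _|v _]; rewrite ?inE.
Qed.

End Incidence.

Section EvenCycle.
Variables (G : mgraph) (k : nat) (vs : 'I_k -> vertex G) (es : 'I_k -> edge G).

Definition even_edges : {set edge G} := [set es j | j : 'I_k & ~~ odd j].

Hypothesis cyc : even_cycle vs es.

Lemma odd_ordS (j : 'I_k) : odd (ordS j) = ~~ odd j.
Proof.
have [_ evk _ _ _] := cyc.
rewrite /=; case: (ltngtP j.+1 k) => [lt|gt|eq].
- by rewrite modn_small.
- by move: gt; rewrite ltnNge ltn_ord.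
- by rewrite eq modnn -[~~ _]/(odd j.+1) eq (negbTE evk).
Qed.

Lemma even_cycle_inc (i j : 'I_k) : inc (es j) (vs i) -> i = j \/ i = ordS j.
Proof. by have [_ _ injv _ jn] := cyc; case/(joins_inc (jn j)) => /injv ->; auto. Qed.

Lemma even_edges_at (i : 'I_k) :
  [set e in even_edges | inc e (vs i)] = [set es (if odd i then ord_pred i else i)].
Proof.
have [_ _ _ _ jn] := cyc.
apply/setP => e; rewrite !inE; apply/andP/eqP => [[]|->].
  case/imsetP => j; rewrite inE => jev -> /even_cycle_inc [] ->.
    by rewrite (negbTE jev).
  by rewrite odd_ordS jev ordSK.
split; case: ifP => oi.
- by apply: imset_f; move: oi; rewrite inE -{1}(ord_predK i) odd_ordS.
- by apply: imset_f; rewrite inE oi.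
- by rewrite -{2}(ord_predK i); apply: joins_incr (jn _).
- exact: joins_incl (jn i).
Qed.

Lemma perfect_matchingU_even_edges (M : {set edge G}) :
  perfect_matching_del (cycle_vertices vs) M -> perfect_matching (M :|: even_edges).
Proof.
have [_ _ _ _ jn] := cyc.
move=> [Mout Mcov] v; have vsC i : vs i \in cycle_vertices vs by apply: imset_f.
case: (boolP (v \in cycle_vertices vs)) => [/imsetP [i _ ->]|vC].
  rewrite -(cards1 (es (if odd i then ord_pred i else i))) -even_edges_at.
  apply: eq_card => e; rewrite !inE; case eM: (e \in M) => //=.
  suff -> : inc e (vs i) = false by rewrite andbF.
  by apply/negbTE/negP => /inc_ends [] vi; have := Mout e eM; rewrite -vi vsC ?andbF.
rewrite -(Mcov v vC); apply: eq_card => e; rewrite !inE.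
case: (e \in M) => //=; apply/negbTE/negP => /andP [/imsetP [j _ ->]].
by case/(joins_inc (jn j)) => vj; rewrite vj vsC in vC.
Qed.

End EvenCycle.

Section SeqCycle.
Variable G : mgraph.
Local Notation pair := (vertex G * edge G)%type.
Implicit Types (c : seq pair) (w : nat -> vertex G) (we : nat -> edge G).

(* A cycle v_0 e_0 v_1 ... v_(k-1) e_(k-1) v_0 is encoded as the sequence of the
   pairs (v_i, e_i). *)
Definition link (p q : pair) : bool := joins p.2 p.1 q.1.

Definition seq_cycle (c : seq pair) : Prop :=
  [/\ 2 <= size c, ~~ odd (size c), uniq (unzip1 c), uniq (unzip2 c) & cycle link c].

Definition cycle_seq k (vs : 'I_k -> vertex G) (es : 'I_k -> edge G) : seq pair :=
  [seq (vs i, es i) | i <- enum 'I_k].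

Lemma size_cycle_seq k (vs : 'I_k -> vertex G) es : size (cycle_seq vs es) = k.
Proof. by rewrite size_map size_enum_ord. Qed.

Lemma nth_cycle_seq k (vs : 'I_k -> vertex G) es p0 (i : 'I_k) :
  nth p0 (cycle_seq vs es) i = (vs i, es i).
Proof. by rewrite (nth_map i) ?size_enum_ord // nth_ord_enum. Qed.

Lemma unzip1_cycle_seq k (vs : 'I_k -> vertex G) es :
  unzip1 (cycle_seq vs es) = [seq vs i | i <- enum 'I_k].
Proof. by rewrite /unzip1 -map_comp. Qed.

Lemma unzip2_cycle_seq k (vs : 'I_k -> vertex G) es :
  unzip2 (cycle_seq vs es) = [seq es i | i <- enum 'I_k].
Proof. by rewrite /unzip2 -map_comp. Qed.

Lemma cycle_seq_nth p0 (c : seq pair) :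
  cycle_seq (fun i : 'I_(size c) => (nth p0 c i).1) (fun i => (nth p0 c i).2) = c.
Proof.
apply: (@eq_from_nth _ p0); rewrite ?size_cycle_seq // => j jc.
by rewrite -[j]/(val (Ordinal jc)) nth_cycle_seq -surjective_pairing.
Qed.

Lemma cycle_vertices_seq k (vs : 'I_k -> vertex G) es :
  cycle_vertices vs = [set x in unzip1 (cycle_seq vs es)].
Proof.
apply/setP => x; rewrite [in RHS]inE unzip1_cycle_seq.
by apply/imsetP/mapP => -[i _ ->]; exists i; rewrite ?mem_enum.
Qed.

Lemma cycle_link_seq k (vs : 'I_k -> vertex G) es :
  cycle link (cycle_seq vs es) <-> forall i, joins (es i) (vs i) (vs (ordS i)).
Proof.
case: k vs es => [|k] vs es.
  have /nilP -> : nilp (cycle_seq vs es) by rewrite /nilp size_cycle_seq.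
  by split=> // _ [].
have nthS (i : 'I_k.+1) : nth (vs ord0, es ord0) (cycle_seq vs es) (i.+1 %% k.+1) =
    (vs (ordS i), es (ordS i)) := nth_cycle_seq _ _ _ (ordS i).
split=> [/(cycle_nthP _ (vs ord0, es ord0)) h i|h].
  by have := h i; rewrite size_cycle_seq ltn_ord nthS nth_cycle_seq => /(_ isT).
apply/(cycle_nthP _ (vs ord0, es ord0)) => j; rewrite size_cycle_seq => jk.
by have := h (Ordinal jk); rewrite -[j]/(val (Ordinal jk)) nthS nth_cycle_seq.
Qed.

Lemma even_cycle_seqE k (vs : 'I_k -> vertex G) es :
  even_cycle vs es <-> seq_cycle (cycle_seq vs es).
Proof.
rewrite /seq_cycle size_cycle_seq unzip1_cycle_seq unzip2_cycle_seq.
have uniqE (T : eqType) (f : 'I_k -> T) : uniq [seq f i | i <- enum 'I_k] = injectiveb f by [].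
rewrite !uniqE; split=> -[k2 ev /injectiveP vi /injectiveP ei /cycle_link_seq jn].
  by split=> //; apply/injectiveP.
by split.
Qed.

Lemma cycle_link_inc c p : cycle link c -> p \in c -> inc p.2 p.1.
Proof. by move=> cc pc; apply: joins_incl (next_cycle cc pc). Qed.

Lemma seq_cycle_rot i c : seq_cycle c -> seq_cycle (rot i c).
Proof.
by case=> *; split; rewrite ?size_rot /unzip1 /unzip2 ?map_rot ?rot_uniq ?rot_cycle.
Qed.

Definition walk_seq (w : nat -> vertex G) (we : nat -> edge G) n : seq pair :=
  [seq (w j, we j) | j <- iota 0 n].

Lemma unzip1_walk_seq w we n :
  unzip1 (walk_seq w we n) = [seq w j | j <- iota 0 n].
Proof. by rewrite /unzip1 -map_comp. Qed.

Lemma unzip2_walk_seq w we n :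
  unzip2 (walk_seq w we n) = [seq we j | j <- iota 0 n].
Proof. by rewrite /unzip2 -map_comp. Qed.

Lemma walk_seqS w we n : walk_seq w we n.+1 = rcons (walk_seq w we n) (w n, we n).
Proof. by rewrite /walk_seq -addn1 iotaD map_cat cats1. Qed.

Lemma path_walk_seq w we n q e :
  (forall j, joins (we j) (w j) (w j.+1)) -> joins q.2 q.1 (w 0) ->
  path link q (rcons (walk_seq w we n) (w n, e)).
Proof.
move=> wj q0; elim: n e => [|n IH] e; first by rewrite /= /link q0.
by rewrite walk_seqS rcons_path IH last_rcons /link /= wj.
Qed.

Lemma uniq_walk_edges w we n : {in [pred j | j <= n] &, injective w} ->
  (forall j, joins (we j) (w j) (w j.+1)) -> uniq [seq we j | j <- iota 0 n].
Proof.
move=> winj wj; rewrite map_inj_in_uniq ?iota_uniq // => j l.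
rewrite !mem_iota !add0n => jn ln e.
have := wj l; rewrite -e => /(joins_uniq (wj j)) [[wjl _]|[wjl wlj]].
  by apply: winj wjl; rewrite inE ltnW.
have := winj _ _ _ _ wjl; have := winj _ _ _ _ wlj; rewrite !inE; lia.
Qed.

End SeqCycle.

Arguments link {G} p q.

Lemma seq_cycle_extend (G : mgraph) (c : seq (vertex G * edge G)) :
  cycle_extendable G -> seq_cycle c ->
  exists M A, [/\ perfect_matching_del [set x in unzip1 c] M, perfect_matching (M :|: A),
                 {subset A <= unzip2 c} & forall p s, c = p :: s -> p.2 \in A].
Proof.
case: c => [|p0 s] ceG cc; first by case: cc.
set c := p0 :: s.
pose vs (i : 'I_(size c)) := (nth p0 c i).1; pose es (i : 'I_(size c)) := (nth p0 c i).2.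
have cyc : even_cycle vs es by rewrite even_cycle_seqE cycle_seq_nth.
have [M pmd] := ceG.2 _ _ _ cyc.
exists M, (even_edges es); split.
- by move: pmd; rewrite (cycle_vertices_seq vs es) cycle_seq_nth.
- exact: (perfect_matchingU_even_edges cyc pmd).
- by move=> e /imsetP [i _ ->]; apply: (map_f snd); apply: mem_nth.
- move=> p s' [<- _]; apply/imsetP; by exists (Ordinal (ltn0Sn (size s))); rewrite ?inE.
Qed.

Section Cut.
Variables (G : mgraph) (X : {set vertex G}).
Implicit Types (e : edge G) (u v : vertex G).

Lemma cutC : cut (~: X) = cut X.
Proof. by apply/setP => e; rewrite !inE; case: (src e \in X); case: (tgt e \in X). Qed.

Lemma cut_joins e v u : joins e v u -> v \in X -> (e \in cut X) = (u \notin X).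
Proof. by rewrite inE => /joins_ends [] [-> ->] ->; rewrite // eq_sym. Qed.

Lemma tight_cut_uniq M e e' : tight_cut X -> perfect_matching M ->
  e \in M -> e \in cut X -> e' \in M -> e' \in cut X -> e = e'.
Proof. by move=> tight pM *; apply: (cards1_eq (tight M pM)); rewrite inE; apply/andP. Qed.

Definition xend e := if src e \in X then src e else tgt e.

Lemma xend_inc e : inc e (xend e).
Proof. by rewrite /xend; case: ifP; rewrite ?inc_src ?inc_tgt. Qed.

Lemma xend_in e : e \in cut X -> xend e \in X.
Proof. by rewrite /xend inE; case: ifP => //= _; case: (tgt e \in X). Qed.

Lemma xend_eq e v : e \in cut X -> inc e v -> v \in X -> v = xend e.
Proof.
rewrite /xend inE => ecut /inc_ends [] -> vX; first by rewrite vX.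
by move: ecut; rewrite vX; case: (src e \in X).
Qed.

End Cut.

Section Mate.
Variables (G : mgraph) (e_def : edge G) (M : {set edge G}).
Hypotheses (Gll : loopless G) (pM : perfect_matching M).

Definition mate_edge (v : vertex G) : edge G := odflt e_def [pick e in M | inc e v].

Definition mate (v : vertex G) : vertex G :=
  if src (mate_edge v) == v then tgt (mate_edge v) else src (mate_edge v).

Lemma mate_edgeP v : mate_edge v \in M /\ inc (mate_edge v) v.
Proof.
rewrite /mate_edge; case: pickP => [e /andP [] //|none].
have := pM v; rewrite (_ : [set e in M | inc e v] = set0) ?cards0 //.
by apply/setP => e; rewrite !inE none.
Qed.

Lemma mate_edge_uniq v e : e \in M -> inc e v -> e = mate_edge v.
Proof.
move=> eM ev; have [mM mv] := mate_edgeP v.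
by apply: (cards1_eq (pM v)); rewrite inE ?eM ?mM.
Qed.

Lemma mate_joins v : joins (mate_edge v) v (mate v).
Proof.
have [_] := mate_edgeP v; rewrite /mate /joins /inc.
by case: eqP => [->|_] /= h; rewrite ?eqxx ?h //= orbT.
Qed.

Lemma mate_neq v : mate v != v.
Proof.
have := Gll (mate_edge v).
by case/joins_ends: (mate_joins v) => -[<- <-] //; rewrite eq_sym.
Qed.

Lemma mate_edge_mate v : mate_edge (mate v) = mate_edge v.
Proof. by have [mM _] := mate_edgeP v; apply/esym/mate_edge_uniq/joins_incr/mate_joins. Qed.

Lemma mateK : involutive mate.
Proof.
move=> v; have := mate_joins (mate v); rewrite mate_edge_mate.
case/(joins_uniq (mate_joins v)) => -[vm _]; last by rewrite -vm.
by move: (mate_neq v); rewrite -vm eqxx.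
Qed.

End Mate.

Section AlternatingWalk.
Variables (G : mgraph) (X : {set vertex G}) (M N : {set edge G}) (eM eN : edge G).
Hypotheses (Gll : loopless G) (pM : perfect_matching M) (pN : perfect_matching N).
Hypotheses (tight : tight_cut X) (eM_M : eM \in M) (eN_N : eN \in N).
Hypotheses (eM_cut : eM \in cut X) (eN_cut : eN \in cut X).

Definition matching_at j := if odd j then M else N.

Fixpoint walk j := if j is i.+1 then mate eM (matching_at i) (walk i) else xend X eM.

Definition walk_edge j := mate_edge eM (matching_at j) (walk j).

Lemma perfect_matching_at j : perfect_matching (matching_at j).
Proof. by rewrite /matching_at; case: odd. Qed.

Lemma walk_joins j : joins (walk_edge j) (walk j) (walk j.+1).
Proof. exact: mate_joins (perfect_matching_at j) _. Qed.

Lemma walk_prev j : walk j = mate eM (matching_at j) (walk j.+1).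
Proof. by rewrite /= (mateK eM Gll (perfect_matching_at j)). Qed.

Lemma matching_at_double j d : matching_at (j + d.*2) = matching_at j.
Proof. by rewrite /matching_at oddD odd_double addbF. Qed.

Lemma walk_neq_odd_shift j d : walk j != walk (j + d.*2.+1).
Proof.
elim: d j => [|d IH] j; first by rewrite addn1 eq_sym (mate_neq eM Gll (perfect_matching_at _)).
apply: contra (IH j.+1) => /eqP wj; apply/eqP.
have -> : j.+1 + d.*2.+1 = j + d.+1.*2 by rewrite doubleS; lia.
by rewrite [walk j.+1]/= wj [in RHS]walk_prev matching_at_double addnS.
Qed.

Lemma walk_even_shift j d : walk j = walk (j + d.*2) -> walk 0 = walk d.*2.
Proof.
elim: j => [|j IH]; first by rewrite add0n.
move=> h; apply: IH.
by rewrite walk_prev h [in RHS]walk_prev matching_at_double addSn.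
Qed.

Lemma mate_xend_out : mate eM M (xend X eM) \notin X.
Proof.
have := mate_joins eM pM (xend X eM).
rewrite -(mate_edge_uniq eM pM eM_M (xend_inc X eM)) => j.
by rewrite -(cut_joins j) ?xend_in.
Qed.

Lemma walk_return_out d : 0 < d -> walk d.*2 = walk 0 -> walk d.*2.-1 \notin X.
Proof.
case: d => // d _; rewrite doubleS => back.
by rewrite [_.-1]/= walk_prev back /matching_at /= odd_double; apply: mate_xend_out.
Qed.

(* An M-edge leaving X is eM, which would bring the walk back to its start after an
   odd number of steps. *)
Lemma walk_stays_in n : (forall j, j < n -> ~~ odd j -> walk j != xend X eN) ->
  forall j, j <= n -> walk j \in X.
Proof.
move=> avoid; elim=> [|j IH] jn; first exact: xend_in.
have wjX := IH (ltnW jn); apply: contraT => out.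
have ecut : walk_edge j \in cut X by rewrite (cut_joins (walk_joins j) wjX) out.
have [inM inc_j] := mate_edgeP eM (perfect_matching_at j) (walk j).
move: inM inc_j ecut; rewrite /walk_edge /matching_at; case: ifP => oj in_j inc_j ecut.
  rewrite (tight_cut_uniq tight pM in_j ecut eM_M eM_cut) in inc_j.
  have wj0 := xend_eq eM_cut inc_j wjX.
  have jE : (j./2).*2.+1 = j by rewrite -[RHS](odd_double_half j) oj.
  by have := walk_neq_odd_shift 0 j./2; rewrite add0n jE wj0 eqxx.
rewrite (tight_cut_uniq tight pN in_j ecut eN_N eN_cut) in inc_j.
by have := avoid j jn; rewrite oj -(xend_eq eN_cut inc_j wjX) eqxx => /(_ isT).
Qed.

Lemma walk_inj_in n : (forall j, j <= n -> walk j \in X) ->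
  {in [pred j | j <= n] &, injective walk}.
Proof.
move=> inX.
have neq j l : j < l -> l <= n -> walk j != walk l.
  move=> jl ln.
  have [d [->|[d0 ld]]] : exists d, l = j + d.*2.+1 \/ 0 < d /\ l = j + d.*2.
    by exists (l - j)./2; have := odd_double_half (l - j); case: odd => /= h; lia.
  - exact: walk_neq_odd_shift.
  - apply/negP => /eqP; rewrite ld => /walk_even_shift w0.
    by have := walk_return_out d0 (esym w0); rewrite inX //; lia.
move=> j l; rewrite !inE => jn ln wjl; case: (ltngtP j l) => // [jl|lj].
  by move: (neq j l jl ln); rewrite wjl eqxx.
by move: (neq l j lj jn); rewrite wjl eqxx.
Qed.

Lemma walk_double d : walk d.*2 = iter d (mate eM M \o mate eM N) (walk 0).
Proof. by elim: d => // d IH; rewrite doubleS iterS -IH /= /matching_at /= odd_double. Qed.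

(* mate M \o mate N is a permutation, so the walk returns to its start at an even
   step, coming from outside X. *)
Lemma walk_reaches_target : exists n, ~~ odd n && (walk n == xend X eN).
Proof.
pose p := mate eM M \o mate eM N.
have p_inj : injective p.
  by apply: (can_inj (g := mate eM N \o mate eM M)) => v /=; rewrite !(mateK eM Gll).
have back : walk (order p (walk 0)).*2 = walk 0 by rewrite walk_double iter_order.
move/negP: (walk_return_out (order_gt0 _ _) back).
set m := order p (walk 0).
case: (boolP [exists j : 'I_m.*2, ~~ odd j && (walk j == xend X eN)]).
  by case/existsP => j hj _; exists j.
move/existsPn => none []; apply: (walk_stays_in (n := m.*2.-1)) => // j jm oj.
have jm' : j < m.*2 by lia.
by have := none (Ordinal jm'); rewrite /= oj.
Qed.

Lemma walk_to_target : exists n, [/\ ~~ odd n, walk n = xend X eN,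
  forall j, j <= n -> walk j \in X & {in [pred j | j <= n] &, injective walk}].
Proof.
case: (ex_minnP walk_reaches_target) => n /andP [evn /eqP wn] minn.
have inX : forall j, j <= n -> walk j \in X.
  apply: walk_stays_in => j jn oj; apply: contraTneq jn => wj.
  by rewrite -leqNgt minn // oj wj eqxx.
by exists n; split; last exact: walk_inj_in.
Qed.

End AlternatingWalk.

Section Contraction.
Variables (G : mgraph) (X : {set vertex G}).
Local Notation GX := (contract X).
Local Notation sv := {v : vertex G | v \notin X}.
Implicit Types (f : edge GX) (p q : vertex GX * edge GX) (c : seq (vertex GX * edge GX)).

Lemma cmap_none v : (cmap X v == None) = (v \in X).
Proof.
rewrite /cmap; case: insubP => [u vX _|vX] /=; first by apply/esym/negbTE.
by move: vX; rewrite negbK => ->.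
Qed.

Lemma cmap_some v (w : sv) : (cmap X v == Some w) = (v == val w).
Proof.
rewrite /cmap; case: insubP => [u _ <-|]; first by apply/eqP/eqP => [[->]|/val_inj ->].
by move=> vX; apply/esym/negbTE; apply: contra vX => /eqP ->; exact: (valP w).
Qed.

Lemma cmapK (w : sv) : cmap X (val w) = Some w.
Proof. by apply/eqP; rewrite cmap_some. Qed.

Lemma inc_some (f : edge GX) (w : sv) : inc f (Some w) = inc (val f) (val w).
Proof. by rewrite /inc /= !cmap_some. Qed.

Lemma inc_none (f : edge GX) : inc f None = (val f \in cut X).
Proof.
rewrite /inc /= !cmap_none inE.
by have := valP f; case: (src _ \in X); case: (tgt _ \in X).
Qed.

Lemma inc_cut (f : edge GX) z : inc (val f) z -> z \in X -> val f \in cut X.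
Proof.
move=> /inc_ends [] -> zX; rewrite inE zX; have := valP f; rewrite zX //=.
by case: (_ \in X).
Qed.

Definition restr (M : {set edge G}) : {set edge GX} := [set f | val f \in M].

Lemma card_restr (B : {set edge G}) :
  {in B, forall e, ~~ ((src e \in X) && (tgt e \in X))} -> #|restr B| = #|B|.
Proof.
move=> Bcross; rewrite -(card_imset _ val_inj); apply: eq_card => e.
apply/imsetP/idP => [[f]|eB]; first by rewrite inE => ? ->.
by exists (Sub e (Bcross e eB)); rewrite ?inE SubK.
Qed.

Lemma restr_perfect_matching_del (M : {set edge G}) S (T : {set vertex GX}) :
  perfect_matching_del S M -> (forall w : sv, (Some w \in T) = (val w \in S)) ->
  #|M :&: cut X| = (None \notin T) -> perfect_matching_del T (restr M).
Proof.
move=> [Mout Mcov] TS Mcut; split=> [f|[w|] vT].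
- rewrite inE => fM; have /andP [sS tS] := Mout _ fM.
  have endT z : inc (val f) z -> z \notin S -> cmap X z \notin T.
    case cz: (cmap X z) => [w|] fz zS.
      by move/eqP: cz; rewrite cmap_some TS => /eqP <-.
    move/eqP: cz; rewrite cmap_none => /(inc_cut fz) fcut.
    have fMc : val f \in M :&: cut X by rewrite inE fM.
    move: Mcut; case: (None \in T) => //= /eqP; rewrite cards_eq0 => /eqP Mc.
    by rewrite Mc inE in fMc.
  by rewrite /= !endT ?inc_src ?inc_tgt.
- have -> : [set f in restr M | inc f (Some w)] = restr [set e in M | inc e (val w)].
    by apply/setP => f; rewrite !inE inc_some.
  rewrite card_restr; first by apply: Mcov; rewrite -TS.
  by move=> e; rewrite inE => /andP [_ /inc_ends [] <-]; rewrite (negbTE (valP w)) ?andbF.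
have -> : [set f in restr M | inc f None] = restr (M :&: cut X).
  by apply/setP => f; rewrite !inE inc_none !inE.
rewrite card_restr ?Mcut ?vT // => e; rewrite !inE => /andP [_].
by case: (_ \in X); case: (_ \in X).
Qed.

Lemma connect_cmap (p q : vertex G) :
  connect (@adj G) p q -> connect (@adj GX) (cmap X p) (cmap X q).
Proof.
move/connectP => [s pth ->]; elim: s p pth => [|y s IH] p /=; first by rewrite connect0.
case/andP => /existsP [e je] pth; apply: connect_trans (IH _ pth).
case: (boolP ((src e \in X) && (tgt e \in X))) => [/andP [sX tX]|cross].
  have [-> ->] : cmap X p = None /\ cmap X y = None.
    by case/joins_ends: je => -[-> ->]; split; apply/eqP; rewrite cmap_none.
  exact: connect0.
apply: connect1; apply/existsP; exists (Sub e cross).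
by case/joins_ends: je => -[-> ->]; rewrite /joins /= !eqxx ?orbT.
Qed.

Lemma contract_matching_covered :
  matching_covered G -> tight_cut X -> nontrivial_cut X -> matching_covered GX.
Proof.
move=> [Gc [_ Gpm]] tight [X2 cX2]; split; [|split].
- have [x0 x0X] : exists x0, x0 \in X.
    by apply/set0Pn; rewrite -card_gt0; apply: leq_trans X2.
  have cmap_onto u : exists p : vertex G, cmap X p = u.
    case: u => [w|]; first by exists (val w); apply: cmapK.
    by exists x0; apply/eqP; rewrite cmap_none.
  by move=> u v; have [p <-] := cmap_onto u; have [q <-] := cmap_onto v; apply: connect_cmap.
- rewrite card_option card_sig; apply: leq_trans cX2 (leq_trans _ (leqnSn _)).
  by apply: subset_leq_card; apply/subsetP => v; rewrite !inE.
- move=> f; have [M [pM fM]] := Gpm (val f); exists (restr M); split; last by rewrite inE.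
  apply/perfect_matching_del0; apply: (restr_perfect_matching_del (S := set0)) => [|w|].
  + exact/perfect_matching_del0.
  + by rewrite !inE.
  + by rewrite tight // inE.
Qed.

Lemma cut_edge_cycle_none c f : cycle link c ->
  f \in unzip2 c -> val f \in cut X -> None \in unzip1 c.
Proof.
move=> cc /mapP [p pc ->]; rewrite -inc_none => /(joins_inc (next_cycle cc pc)) [] ->.
  exact: map_f.
by apply: map_f; rewrite mem_next.
Qed.

(* The contracted vertex is lifted to the end in X of the edge paired with it. *)
Definition lift_end (f : edge GX) (v : vertex GX) : vertex G :=
  if v is Some w then val w else xend X (val f).

Definition lift_pair (p : vertex GX * edge GX) : vertex G * edge G :=
  (lift_end p.2 p.1, val p.2).

Lemma lift_end_cmap (f : edge GX) z : inc (val f) z -> lift_end f (cmap X z) = z.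
Proof.
case cz: (cmap X z) => [w|] fz /=; first by move/eqP: cz; rewrite cmap_some => /eqP ->.
by move/eqP: cz; rewrite cmap_none => zX; rewrite -(xend_eq (inc_cut fz zX) fz zX).
Qed.

Lemma cmap_lift_end (f : edge GX) v : inc f v -> cmap X (lift_end f v) = v.
Proof.
case: v => [w|] /=; first by rewrite cmapK.
by rewrite inc_none => /xend_in xX; apply/eqP; rewrite cmap_none.
Qed.

Lemma joins_lift (f : edge GX) u v :
  joins f u v -> joins (val f) (lift_end f u) (lift_end f v).
Proof.
case/joins_ends => -[-> ->] /=; rewrite !lift_end_cmap ?inc_src ?inc_tgt //.
  by rewrite /joins !eqxx.
by rewrite /joins !eqxx orbT.
Qed.

Lemma link_lift p q : q.1 != None -> link p q -> link (lift_pair p) (lift_pair q).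
Proof. by case: q => [[w|] f] //= _ /joins_lift. Qed.

Lemma path_lift p s : all (fun q => q.1 != None) s -> path link p s ->
  path link (lift_pair p) (map lift_pair s).
Proof.
elim: s p => //= q s IH p /andP [qS sS] /andP [pq qs].
by rewrite link_lift ?IH.
Qed.

Lemma cycle_lift c : all (fun q => q.1 != None) c -> cycle link c ->
  cycle link (map lift_pair c).
Proof.
case: c => //= p s /andP [pS sS]; rewrite -map_rcons; apply: path_lift.
by rewrite all_rcons pS.
Qed.

Lemma unzip1_lift c : cycle link c -> map (cmap X) (unzip1 (map lift_pair c)) = unzip1 c.
Proof.
move=> cc; rewrite /unzip1 -!map_comp; apply/eq_in_map => p pc /=.
exact: cmap_lift_end (cycle_link_inc cc pc).
Qed.

Lemma unzip2_lift c : unzip2 (map lift_pair c) = map val (unzip2 c).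
Proof. by rewrite /unzip2 -!map_comp. Qed.

Lemma mem_unzip1_lift c (w : sv) : cycle link c ->
  (val w \in unzip1 (map lift_pair c)) = (Some w \in unzip1 c).
Proof.
move=> cc; apply/idP/idP => [/(map_f (cmap X))|/mapP [[v f] pc /= vE]].
  by rewrite unzip1_lift // cmapK.
by apply/mapP; exists (lift_pair (v, f)); rewrite ?map_f // -vE.
Qed.

Lemma uniq_lift c : uniq (unzip1 c) -> uniq (unzip2 c) -> cycle link c ->
  uniq (unzip1 (map lift_pair c)) && uniq (unzip2 (map lift_pair c)).
Proof.
move=> u1 u2 cc; rewrite unzip2_lift (map_inj_uniq val_inj) u2 andbT.
by apply: (map_uniq (f := cmap X)); rewrite unzip1_lift.
Qed.

Lemma lift_some_notin (s : seq (vertex GX * edge GX)) v :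
  all (fun q => q.1 != None) s -> v \in unzip1 (map lift_pair s) -> v \notin X.
Proof.
move/allP=> sS; case/mapP => p /mapP [[[x|] g] qs ->] -> /=; first exact: valP x.
by have := sS _ qs.
Qed.

Section LiftThrough.
Variables (f0 : edge GX) (s : seq (vertex GX * edge GX)).
Variables (n : nat) (w : nat -> vertex G) (we : nat -> edge G).
Local Notation c := ((None : vertex GX, f0) :: s).
Hypothesis cc : seq_cycle c.
Hypotheses (evn : ~~ odd n) (wj : forall j, joins (we j) (w j) (w j.+1)).
Hypotheses (w0 : w 0 = xend X (val (last (None, f0) s).2)) (wn : w n = xend X (val f0)).
Hypotheses (wX : forall j, j <= n -> w j \in X) (winj : {in [pred j | j <= n] &, injective w}).

(* The lift of c, closed by the walk w which runs inside X from the end in X of the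
   last edge of c back to that of f0. *)
Local Notation cG := (map lift_pair c ++ walk_seq w we n).

Lemma tail_avoids_none : all (fun q => q.1 != None) s.
Proof.
have [_ _ u1 _ _] := cc; move: u1; rewrite [unzip1 _]map_cons cons_uniq => /andP [nN _].
by apply/allP => q qs; apply: contraNneq nN => qN; rewrite /= -qN; apply: map_f.
Qed.

Lemma cycle_through : cycle link cG.
Proof.
have [_ _ _ _] := cc; rewrite [cycle _ _]/= rcons_path => /andP [ps back].
rewrite cat_cons [cycle _ _]/= rcons_cat cat_path path_lift ?tail_avoids_none //= last_map.
have -> : lift_pair (None, f0) = (w n, val f0) by rewrite wn.
by apply: path_walk_seq => //; rewrite w0; apply: joins_lift back.
Qed.

Lemma walk_vertices_in v :
  v \in [seq w j | j <- iota 0 n] -> v \in X /\ v != xend X (val f0).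
Proof.
case/mapP => j; rewrite mem_iota add0n => jn ->; split; first by rewrite wX // ltnW.
by rewrite -wn; apply/eqP => /winj; rewrite !inE ltnW // leqnn => /(_ isT isT) jE; lia.
Qed.

Lemma unzip1_through : unzip1 cG = unzip1 (map lift_pair c) ++ [seq w j | j <- iota 0 n].
Proof. by rewrite -(unzip1_walk_seq w we) /unzip1 map_cat. Qed.

Lemma uniq_vertices_through : uniq (unzip1 cG).
Proof.
have [_ _ u1 u2 cyc] := cc.
rewrite unzip1_through cat_uniq; apply/and3P; split.
- by case/andP: (uniq_lift u1 u2 cyc).
- apply/hasPn => v /walk_vertices_in [vX va]; rewrite /= inE negb_or va /=.
  by apply: contraL vX; apply: lift_some_notin tail_avoids_none.
- rewrite map_inj_in_uniq ?iota_uniq // => j l; rewrite !mem_iota !add0n => jn ln.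
  by apply: winj; rewrite inE ltnW.
Qed.

Lemma uniq_edges_through : uniq (unzip2 cG).
Proof.
have [_ _ u1 u2 cyc] := cc.
have -> : unzip2 cG = unzip2 (map lift_pair c) ++ [seq we j | j <- iota 0 n].
  by rewrite -(unzip2_walk_seq w we) /unzip2 map_cat.
rewrite cat_uniq (uniq_walk_edges winj wj) andbT; apply/andP; split.
  by case/andP: (uniq_lift u1 u2 cyc).
apply/hasPn => e /mapP [j]; rewrite mem_iota add0n => jn ->.
rewrite unzip2_lift; apply/mapP => -[f _ wef]; have := valP f; rewrite -wef.
by case/joins_ends: (wj j) => -[<- <-]; rewrite !wX // ltnW.
Qed.

Lemma seq_cycle_through : seq_cycle cG.
Proof.
have [c2 evc _ _ _] := cc.
split; rewrite ?size_cat ?size_map ?size_iota ?oddD ?(negbTE evc) ?(negbTE evn) //.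
- exact: leq_trans c2 (leq_addr _ _).
- exact: uniq_vertices_through.
- exact: uniq_edges_through.
- exact: cycle_through.
Qed.

Lemma mem_through (v : sv) : (val v \in unzip1 cG) = (Some v \in unzip1 c).
Proof.
have [_ _ _ _ cyc] := cc.
rewrite -mem_unzip1_lift // unzip1_through mem_cat.
by apply: orb_idr => /(walk_vertices_in) [vX _]; move: (valP v); rewrite vX.
Qed.

End LiftThrough.
End Contraction.

Arguments lift_pair {G X} p.

Section Extension.
Variables (G : mgraph) (X : {set vertex G}).
Hypotheses (Gll : loopless G) (tight : tight_cut X) (ceG : cycle_extendable G).
Local Notation GX := (contract X).

Lemma contract_extend_avoiding (c : seq (vertex GX * edge GX)) :
  seq_cycle c -> None \notin unzip1 c ->
  exists M, perfect_matching_del [set x in unzip1 c] M.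
Proof.
move=> [c2 evc u1 u2 cyc] nN.
have allS : all (fun q => q.1 != None) c.
  by apply/allP => q qc; apply: contraNneq nN => <-; apply: map_f.
have cG : seq_cycle (map lift_pair c).
  have /andP [u1' u2'] := uniq_lift u1 u2 cyc.
  by split; rewrite ?size_map // cycle_lift.
have [M [A [pmd pMA Ac _]]] := seq_cycle_extend ceG cG.
exists (restr X M); apply: restr_perfect_matching_del pmd _ _ => [w|].
  by rewrite !inE mem_unzip1_lift.
rewrite inE (negbTE nN) /= -(tight pMA); apply: eq_card => e; rewrite !inE.
case: (e \in M) => //=; apply/esym/negbTE/andP => -[/Ac].
rewrite unzip2_lift => /mapP [f fc ->] fcut.
by move: nN; rewrite (cut_edge_cycle_none cyc fc) // inE.
Qed.

Lemma contract_extend_through f0 (s : seq (vertex GX * edge GX)) :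
  seq_cycle ((None : vertex GX, f0) :: s) ->
  exists M, perfect_matching_del [set x in unzip1 ((None : vertex GX, f0) :: s)] M.
Proof.
move=> cc; have [_ _ _ _ cyc] := cc.
set e1 := (last (None, f0) s).2.
have f0cut : val f0 \in cut X.
  by rewrite -inc_none; apply: (cycle_link_inc cyc (mem_head _ _)).
have e1cut : val e1 \in cut X.
  by move: cyc; rewrite [cycle _ _]/= rcons_path -inc_none => /andP [_ /joins_incr].
have [M0 [pM0 f0M0]] := ceG.1.2.2 (val f0).
have [M1 [pM1 e1M1]] := ceG.1.2.2 (val e1).
have [n [evn wn wX winj]] := walk_to_target Gll pM1 pM0 tight e1M1 f0M0 e1cut f0cut.
have cG := seq_cycle_through cc evn (walk_joins X (val e1) pM1 pM0) (erefl _) wn wX winj.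
have [M [A [pmd pMA _ A0]]] := seq_cycle_extend ceG cG.
have f0A : val f0 \in A := A0 _ _ erefl.
have noMcut : #|M :&: cut X| = 0.
  apply/eqP; rewrite cards_eq0; apply/eqP/setP => e; rewrite !inE.
  apply/negP => /andP [eM ecut].
  have ef0 : e = val f0 by apply: (tight_cut_uniq tight pMA); rewrite // inE ?eM ?f0A ?orbT.
  have := pmd.1 e eM; rewrite ef0 !inE.
  by case/inc_ends: (xend_inc X (val f0)) => <-; rewrite /= eqxx ?andbF.
exists (restr X M); apply: restr_perfect_matching_del pmd _ _ => [v|].
  by rewrite !in_set (mem_through _ cc).
by rewrite noMcut in_set mem_head.
Qed.

Lemma contract_cycle_extendable : nontrivial_cut X -> cycle_extendable GX.
Proof.
move=> ntX; split; first exact: contract_matching_covered ceG.1 tight ntX.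
move=> k vs es /even_cycle_seqE cc; rewrite (cycle_vertices_seq vs es).
set c := cycle_seq vs es in cc *.
case: (boolP (None \in unzip1 c)) => [|nN]; last exact: contract_extend_avoiding.
case/mapP => -[v f] pc /= vN.
case: (rot_to pc) => i s rot_c; rewrite -vN in rot_c.
have := seq_cycle_rot i cc; rewrite rot_c => /contract_extend_through [M pmd].
exists M; congr (perfect_matching_del _ M): pmd.
by rewrite -rot_c; apply/setP => x; rewrite !inE /unzip1 map_rot mem_rot.
Qed.

End Extension.

Theorem lemma2p4 (G : mgraph) (X : {set vertex G}) :
  loopless G -> matching_covered G -> tight_cut X -> nontrivial_cut X ->
  cycle_extendable G ->
  cycle_extendable (contract X) /\ cycle_extendable (contract (~: X)).
Proof.
move=> Gll _ tight ntX ceG; split; first exact: contract_cycle_extendable.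
have tightC : tight_cut (~: X) by move=> M pM; rewrite cutC; apply: tight.
have ntC : nontrivial_cut (~: X) by case: ntX => X2 cX2; rewrite /nontrivial_cut setCK.
exact: contract_cycle_extendable.
Qed.
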